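(* For every $m\geq 1$, $\mathrm{capt}(T_{m+1},m)=4m-2$.
   Context: The subdivided star $T_n$ is obtained from the star $K_{1,n}$ by adding $n$ new vertices and joining each new vertex to a distinct leaf of the star (so $T_n$ has $2n+1$ vertices and diameter $4$ for $n\geq 2$). All graphs are reflexive (a player may stay in place). The game of $k$ cops and $m$ robbers on $G$: in round 0 the cops first choose starting vertices, then the robbers choose theirs. In each round $i\geq 1$, all cops move (each to an adjacent vertex or staying), then all robbers move likewise. Several players may occupy the same vertex. Whenever a cop and some robbers occupy the same vertex, those robbers are captured and take no further part in the game. Both sides have full information. The cops win if all robbers are captured after finitely many rounds. For a cop-win graph $G$, $\mathrm{capt}(G,m)$ is the index of the round in which the last robber is captured when one cop plays to minimize this index and $m$ robbers play to maximize it. *)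

From mathcomp Require Import all_boot.
Set Implicit Arguments. Unset Strict Implicit. Unset Printing Implicit Defensive.

(* A graph is a finite vertex type V with an edge relation e.  All graphs are
   reflexive: a player may move along an edge or stay put. *)
Definition step (V : finType) (e : rel V) (u v : V) : Prop := u = v \/ e u v.

(* Robber configuration: robber i is at Some v, or None once captured. *)
Definition capture (V : finType) (m : nat) (c : V) (r : 'I_m -> option V)
  : 'I_m -> option V :=
  fun i => if r i == Some c then None else r i.

Definition all_captured (V : finType) (m : nat) (r : 'I_m -> option V) : Prop :=
  forall i, r i = None.

(* cop_forces e k c r : in a position at the end of a round (cop at c, live
   robbers at r, captures already performed), the cop can guarantee that all
   robbers are captured within at most k further rounds.  In a round the cop
   moves first (robbers on his new vertex are captured), then every remaining
   robber moves (robbers moving onto the cop's vertex are captured). *)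
Fixpoint cop_forces (V : finType) (e : rel V) (m : nat) (k : nat)
    (c : V) (r : 'I_m -> option V) : Prop :=
  match k with
  | 0 => all_captured r
  | k'.+1 =>
      all_captured r \/
      exists c' : V, step e c c' /\
        let r1 := capture c' r in
        forall mv : 'I_m -> V,
          (forall i, match r1 i with Some v => step e v (mv i) | None => True end) ->
          cop_forces e k' c'
            (capture c' (fun i => match r1 i with Some _ => Some (mv i) | None => None end))
  end.

(* One cop can guarantee that the last of the m robbers is captured in a round
   with index at most t (round 0: cop places, then robbers place). *)
Definition capt_le (V : finType) (e : rel V) (m t : nat) : Prop :=
  exists c0 : V, forall r0 : 'I_m -> V,
    cop_forces e t c0 (capture c0 (fun i => Some (r0 i))).

(* capt(G, m) = t : t is the least round index the cop can guarantee, i.e. the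
   min (over cop strategies) of the max (over robber strategies) of the index
   of the round in which the last robber is captured. *)
Definition is_capt (V : finType) (e : rel V) (m t : nat) : Prop :=
  capt_le e m t /\ forall t', capt_le e m t' -> t <= t'.

(* Vertices: None = centre; Some (i, false) = leaf i of K_{1,n};
   Some (i, true) = the new vertex attached to leaf i. *)
Definition Tvert (n : nat) : finType := option ('I_n * bool)%type.

Definition Tedge (n : nat) : rel (Tvert n) :=
  fun x y =>
    match x, y with
    | None, Some (_, false) => true
    | Some (_, false), None => true
    | Some (i, false), Some (j, true) => i == j
    | Some (i, true), Some (j, false) => i == j
    | _, _ => false
    end.

From mathcomp Require Import all_boot zify.
Set Implicit Arguments. Unset Strict Implicit. Unset Printing Implicit Defensive.

(* Upper bound: from the centre the cop clears a branch in two rounds (leaf,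
   then tip) and gets back to the centre in two more, so m robbers take at most
   4m - 2 rounds, the last return being unnecessary.  Lower bound: let the
   robbers sit still on the tips of the m branches avoiding the cop's start.
   The length of a shortest walk from the cop through all occupied tips drops
   by at most one per round, and it is at least 4m - 2 initially. *)

Section OneCopGame.

Variables (V : finType) (e : rel V) (m : nat).
Implicit Types (c : V) (r : 'I_m -> option V) (mv : 'I_m -> V).

Definition after_round c' r mv : 'I_m -> option V :=
  capture c' (fun i => match capture c' r i with Some _ => Some (mv i) | None => None end).

Definition legal_moves c' r mv : Prop :=
  forall i, match capture c' r i with Some v => step e v (mv i) | None => True end.

Lemma cop_forcesS k c c' r : step e c c' ->
  (forall mv, legal_moves c' r mv -> cop_forces e k c' (after_round c' r mv)) ->
  cop_forces e k.+1 c r.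
Proof. by move=> cc' win; right; exists c'. Qed.

Lemma all_captured_cop_forces k c r : all_captured r -> cop_forces e k c r.
Proof. by case: k => [|k] r0; [|left]. Qed.

Lemma capture_neq c r i : capture c r i != Some c.
Proof. by rewrite /capture; case: (r i =P Some c) => // /eqP. Qed.

Definition live r : {set 'I_m} := [set i | r i != None].

Lemma live_after_round c' r mv : live (after_round c' r mv) \subset live r.
Proof.
by apply/subsetP => i; rewrite !inE /after_round /capture; case: (r i) => //=; case: ifP.
Qed.

Definition occupied r : {set V} := [set v | [exists i, r i == Some v]].

Lemma occupied_capture c r : occupied (capture c r) = occupied r :\ c.
Proof.
apply/setP => v; rewrite !inE /capture.
apply/existsP/andP => [[i]|[vc /existsP[i /eqP riv]]].
  case: (r i =P Some c) => // ric /eqP riv.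
  by split; [apply/eqP => vc; apply: ric; rewrite riv vc | apply/existsP; exists i; rewrite riv].
exists i; rewrite riv ifF //; apply/eqP => -[vc']; by rewrite vc' eqxx in vc.
Qed.

Lemma eq_occupied r1 r2 : r1 =1 r2 -> occupied r1 = occupied r2.
Proof. by move=> r12; apply/setP => v; rewrite !inE; under eq_existsb do rewrite r12. Qed.

Lemma legal_stay c' r : legal_moves c' r (fun i => odflt c' (capture c' r i)).
Proof. by move=> i; case: (capture c' r i) => // v; left. Qed.

Lemma after_round_stay c' r :
  after_round c' r (fun i => odflt c' (capture c' r i)) =1 capture c' r.
Proof.
move=> i; rewrite /after_round /capture.
by case: (r i =P Some c') => [//|]; case: (r i) => [v|] //= /eqP/negbTE ->.
Qed.

Lemma cop_forces_potential (phi : V -> {set V} -> nat) :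
  (forall c, phi c set0 = 0) ->
  (forall c c' S, step e c c' -> phi c S <= (phi c' (S :\ c')).+1) ->
  forall k c r, cop_forces e k c r -> phi c (occupied r) <= k.
Proof.
move=> phi0 phi_step; have phi_captured c r : all_captured r -> phi c (occupied r) = 0.
  move=> r0; suff -> : occupied r = set0 by [].
  by apply/setP => v; rewrite !inE; apply/existsP => -[i]; rewrite r0.
elim=> [|k IH] c r /=; first by move/(phi_captured c) ->.
case=> [/(phi_captured c) -> // | [c' [cc' win]]].
have := IH _ _ (win _ (legal_stay c' r)).
rewrite (eq_occupied (after_round_stay c' r)) occupied_capture.
by move=> le_k; apply: leq_trans (phi_step _ _ (occupied r) cc') _.
Qed.

End OneCopGame.

Section SubdividedStar.

Variables n m : nat.
Local Notation V := (Tvert n).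
Local Notation adj := (step (@Tedge n)).
Local Notation leaf j := (Some (j, false) : V).
Local Notation tip j := (Some (j, true) : V).
Implicit Types (c : V) (B : {set 'I_n}) (S : {set V}) (r : 'I_m -> option V) (mv : 'I_m -> V).

Definition tips S : {set 'I_n} := [set j | tip j \in S].

Lemma tips_setD1 S c : tips (S :\ c) = tips S :\: tips [set c].
Proof. by apply/setP => j; rewrite !inE andbC. Qed.

Lemma tips_set1_tip j : tips [set tip j] = [set j].
Proof. by apply/setP => i; rewrite !inE; apply/eqP/eqP => [[]|->]. Qed.

Lemma tips_set1_nontip c : (forall j, c != tip j) -> tips [set c] = set0.
Proof. by move=> ctip; apply/setP => j; rewrite !inE eq_sym (negbTE (ctip j)). Qed.

(* Distance from [c] to the nearest tip of a branch in [B], when [B] is nonempty. *)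
Definition tip_dist c B : nat :=
  match c with
  | None => 2
  | Some (i, false) => if i \in B then 1 else 3
  | Some (i, true) => if i \in B then 0 else 4
  end.

(* Length of a shortest walk from [c] through the tips of all branches in [B]:
   reach the nearest one, then spend 4 moves on each further tip. *)
Definition potential c B : nat :=
  if B == set0 then 0 else 4 * #|B| - 4 + tip_dist c B.

Lemma tip_dist_step c c' B : adj c c' -> tip_dist c B <= (tip_dist c' B).+1.
Proof.
case=> [-> //|]; case: c c' => [[i [|]]|] [[j [|]]|] //=;
  try (move=> /eqP <-); by case: (_ \in B).
Qed.

Lemma potential_step c c' B : adj c c' -> potential c B <= (potential c' B).+1.
Proof. by rewrite /potential; case: eqP => // _ /(tip_dist_step B); lia. Qed.

Lemma potential_capture c B : potential c B <= potential c (B :\: tips [set c]).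
Proof.
case: c => [[j [|]]|]; last 2 first.
- by rewrite tips_set1_nontip ?setD0 // => i; apply/eqP => -[].
- by rewrite tips_set1_nontip ?setD0.
rewrite tips_set1_tip /potential /tip_dist !inE eqxx /= -!cards_eq0 (cardsD1 j B).
by case: (j \in B); case: #|B :\ j| => [|k] //=; lia.
Qed.

Lemma potential_le_capture k c r :
  cop_forces (@Tedge n) k c r -> potential c (tips (occupied r)) <= k.
Proof.
apply: (cop_forces_potential (phi := fun c S => potential c (tips S))) => /= [c0 | c0 c1 S c01].
  by rewrite /potential (_ : tips set0 = set0) ?eqxx //; apply/setP => j; rewrite !inE.
rewrite tips_setD1; apply: leq_trans (potential_step _ c01) _.
by rewrite ltnS potential_capture.
Qed.

Lemma tips_occupied_lift j c : (forall i b, c = Some (i, b) -> i = j) ->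
  tips (occupied (capture c (fun i : 'I_n.-1 => Some (tip (lift j i))))) = [set~ j].
Proof.
move=> c_j; rewrite occupied_capture tips_setD1; apply/setP => x; rewrite !inE.
have [-> | x_j] /= := eqVneq x j.
  by apply/andP => -[_ /existsP[i /eqP[/eqP]]]; rewrite eq_sym (negbTE (neq_lift j i)).
apply/andP; split; first by apply: contra x_j => /eqP c_x; rewrite (c_j x true).
apply/existsP; case: (unliftP j x) x_j => [i -> _ | ->]; last by rewrite eqxx.
by exists i.
Qed.

Lemma potential_off_branch j c B : (forall i b, c = Some (i, b) -> i = j) ->
  j \notin B -> 4 * #|B| - 2 <= potential c B.
Proof.
move=> c_j jB; rewrite /potential -cards_eq0; case: eqP => [-> // | _].
suff : 2 <= tip_dist c B by lia.
by case: c c_j => [[i [|]]|] // /(_ i _ erefl) ->; rewrite /tip_dist (negbTE jB).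
Qed.

Lemma after_round_leaf j b r mv i : r i = Some (Some (j, b)) ->
  legal_moves (@Tedge n) (leaf j) r mv ->
  after_round (leaf j) r mv i = None \/ after_round (leaf j) r mv i = Some (tip j).
Proof.
move=> rij /(_ i); rewrite /after_round /capture rij.
case: b rij => rij /=; last by rewrite eqxx; left.
rewrite (_ : (_ == _) = false); last by apply/eqP => -[].
case: (mv i) => [[j' b']|] [mv_i|mv_i] //=.
- by case: mv_i => <- <-; right; rewrite ifF //; apply/eqP => -[].
- by case: b' mv_i => //= /eqP <-; left; rewrite eqxx.
Qed.

Lemma after_round_tip j r mv i : r i = None \/ r i = Some (tip j) ->
  after_round (tip j) r mv i = None.
Proof. by rewrite /after_round /capture => -[] ->; rewrite ?eqxx. Qed.

Lemma chase_branch j b r i0 K : r i0 = Some (Some (j, b)) ->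
  (forall r', live r' \subset live r :\ i0 -> cop_forces (@Tedge n) K (tip j) r') ->
  cop_forces (@Tedge n) K.+2 None r.
Proof.
move=> ri0 win; apply: (@cop_forcesS _ _ _ _ _ (leaf j)) => [|mv1 legal1]; first by right.
apply: (@cop_forcesS _ _ _ _ _ (tip j)) => [|mv2 _]; first by right => /=.
apply: win; apply/subsetP => i live_i; rewrite !inE.
have caught := after_round_tip mv2 (after_round_leaf ri0 legal1).
apply/andP; split; first by apply: contraTneq live_i => ->; rewrite inE caught.
have live_r := subsetP (live_after_round _ _ mv1) _ (subsetP (live_after_round _ _ mv2) _ live_i).
by rewrite inE in live_r.
Qed.

Lemma return_to_centre j r K :
  (forall r', live r' \subset live r -> (forall i, r' i != Some None) ->
     cop_forces (@Tedge n) K None r') ->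
  cop_forces (@Tedge n) K.+2 (tip j) r.
Proof.
move=> win; apply: (@cop_forcesS _ _ _ _ _ (leaf j)) => [|mv1 _]; first by right => /=.
apply: (@cop_forcesS _ _ _ _ _ None) => [|mv2 _]; first by right.
apply: win => [|i]; last exact: capture_neq.
exact: subset_trans (live_after_round _ _ _) (live_after_round _ _ _).
Qed.

Lemma cop_forces_from_centre k r : 0 < k -> (forall i, r i != Some None) ->
  #|live r| <= k -> cop_forces (@Tedge n) (4 * k - 2) None r.
Proof.
elim: k r => [//|k IH] r _ r_centre live_r.
case: (set_0Vmem (live r)) => [no_live | [i0 live_i0]].
  apply: all_captured_cop_forces => i; apply/eqP.
  by move/setP/(_ i): no_live; rewrite !inE => /negbFE.
move: (live_i0) (r_centre i0); rewrite inE.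
case ri0: (r i0) => [[[j b]|]|] // _ _.
have live_rest : #|live r :\ i0| <= k by move: live_r; rewrite (cardsD1 i0) live_i0.
case: k IH live_r live_rest => [|k] IH _ live_rest.
  apply: (chase_branch ri0) => r' sub; apply: all_captured_cop_forces => i.
  move: live_rest; rewrite leqn0 cards_eq0 => /eqP rest0.
  by apply/eqP; move: (subsetP sub i); rewrite rest0 !inE; case: (r' i) => // v; apply.
rewrite (_ : 4 * k.+2 - 2 = (4 * k.+1 - 2).+4); last by lia.
apply: (chase_branch ri0) => r' sub; apply: return_to_centre => r'' sub' r''_centre.
apply: IH => //; apply: leq_trans live_rest.
exact: subset_leq_card (subset_trans sub' sub).
Qed.

End SubdividedStar.

Theorem mainTheorem10 (m : nat) :
  1 <= m -> is_capt (@Tedge m.+1) m (4 * m - 2).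
Proof.
move=> m_gt0; split.
  exists None => r0; apply: cop_forces_from_centre m_gt0 _ _ => [i|].
    exact: capture_neq.
  by rewrite -[m in _ <= m]card_ord max_card.
move=> t [c0 win].
pose j : 'I_m.+1 := if c0 is Some (i, _) then i else ord0.
have c0_j i b : c0 = Some (i, b) -> i = j by rewrite /j => ->.
have := potential_le_capture (win (fun i => Some (lift j i, true))).
rewrite tips_occupied_lift //; apply: leq_trans.
have j_off : j \notin [set~ j] by rewrite setC11.
by have := potential_off_branch c0_j j_off; rewrite cardsC1 card_ord.
Qed.
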